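(* Let $G$ be a finite cyclic group whose order has at least two distinct prime divisors. Then the difference graph $\mathcal{D}(G)$ is disconnected if and only if $G\cong\mathbb{Z}_{pq}$ where $p$ and $q$ are two distinct primes. Moreover, the diameter of $\mathcal{D}(G)$ is at most $6$ whenever $G\not\cong\mathbb{Z}_{pq}$.
   Context: For a finite group $G$ with identity $e$: the intersection power graph $\mathcal{G}_I(G)$ has vertex set $G$, two distinct non-identity vertices $x,y$ being adjacent iff $\langle x\rangle\cap\langle y\rangle\neq\{e\}$, and $e$ being adjacent to every other vertex. The power graph $\mathcal{P}(G)$ has vertex set $G$, two distinct vertices being adjacent iff one is a power of the other. The difference graph $\mathcal{D}(G)$ is the graph on vertex set $G$ with edge set $E(\mathcal{G}_I(G))\setminus E(\mathcal{P}(G))$, with all isolated vertices removed. *)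

From mathcomp Require Import all_boot all_fingroup all_algebra all_solvable.
Set Implicit Arguments. Unset Strict Implicit. Unset Printing Implicit Defensive.
Local Open Scope group_scope.

Section DiffGraph.
Variable gT : finGroupType.
Variable G : {set gT}.

Definition ipg_adj (x y : gT) : bool :=
  [&& x \in G, y \in G, x != y &
      [|| x == 1, y == 1 | <[x]> :&: <[y]> != 1]].

Definition pow_adj (x y : gT) : bool :=
  [&& x \in G, y \in G, x != y & (x \in <[y]>) || (y \in <[x]>)].

Definition diff_adj (x y : gT) : bool := ipg_adj x y && ~~ pow_adj x y.

(* Vertex set of D(G): the non-isolated vertices. *)
Definition diff_vertices : {set gT} :=
  [set x in G | [exists y, diff_adj x y]].

(* D(G) is connected: it has at least one vertex and any two vertices are
   joined by a walk in D(G) (walks automatically stay in diff_vertices). *)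
Definition diff_connected : Prop :=
  diff_vertices != set0 /\
  forall x y, x \in diff_vertices -> y \in diff_vertices ->
    connect diff_adj x y.

Definition diff_diam_le (d : nat) : Prop :=
  forall x y, x \in diff_vertices -> y \in diff_vertices ->
    exists s : seq gT, [/\ (size s <= d)%N, path diff_adj x s & last x s = y].
End DiffGraph.

From mathcomp Require Import all_boot all_fingroup all_algebra all_solvable.
From Stdlib Require Import Classical.
Set Implicit Arguments. Unset Strict Implicit. Unset Printing Implicit Defensive.

(* In a cyclic group of order n, adjacency in D(G) only depends on the orders
   of the two elements: x and y are adjacent iff #[x] and #[y] share a prime
   factor while neither divides the other.  For n = pq no divisor of n is of
   that kind, so D(G) has no vertex.  Otherwise the cofactors n/p (p a prime
   divisor of n) are pairwise adjacent and the order of every vertex is within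
   distance 2 of one of them; a walk of length at most 5 from #[x] to the order
   of a neighbour y' of y lifts to G, and the step from y' to y gives 6. *)

Section Walks.
Variables (T : Type) (e : rel T).

Definition walk_le k x y :=
  exists s, [/\ size s <= k, path e x s & last x s = y].

Lemma walk_le1 x y : e x y -> walk_le 1 x y.
Proof. by move=> exy; exists [:: y]; rewrite /= exy. Qed.

Lemma walk_le_leq j k x y : j <= k -> walk_le j x y -> walk_le k x y.
Proof. by move=> jk [s [sj ps ls]]; exists s; split => //; apply: leq_trans jk. Qed.

Lemma walk_le_cat j k x y z :
  walk_le j x y -> walk_le k y z -> walk_le (j + k) x z.
Proof.
move=> [s [sj ps <-]] [t [tk pt <-]]; exists (s ++ t).
by rewrite size_cat leq_add // cat_path ps pt last_cat.
Qed.

Lemma walk_le_sym k x y : symmetric e -> walk_le k x y -> walk_le k y x.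
Proof.
move=> eC [s [sk ps <-]]; exists (rev (belast x s)); split.
- by rewrite size_rev size_belast.
- by rewrite rev_path (eq_path (fun a b => eC b a)).
- by case: s {sk ps} => [|a s] //=; rewrite rev_cons last_rcons.
Qed.

End Walks.

Definition divisor_adj n a b :=
  [&& a %| n, b %| n, 1 < gcdn a b, ~~ (a %| b) & ~~ (b %| a)].

Lemma divisor_adjC n : symmetric (divisor_adj n).
Proof. by move=> a b; rewrite /divisor_adj gcdnC; do !bool_congr. Qed.

Lemma gcdn_gt1 p a b : prime p -> 0 < a -> p %| a -> p %| b -> 1 < gcdn a b.
Proof.
move=> pp a0 pa pb; apply: leq_trans (prime_gt1 pp) (dvdn_leq _ _).
  by rewrite gcdn_gt0 a0.
by rewrite dvdn_gcd pa.
Qed.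

Lemma prime_ndvd_pfactor p q k : prime p -> prime q -> p != q -> ~~ (q %| p ^ k).
Proof. by move=> pp qq pq; rewrite Euclid_dvdX // dvdn_prime2 // eq_sym (negbTE pq). Qed.

Lemma prime_dvd_p_part p n : prime p -> 0 < n -> p %| n -> p %| n`_p.
Proof.
by move=> pp n0 pn; rewrite p_part dvdn_exp // logn_gt0 mem_primes pp n0.
Qed.

Lemma p_part_ndvd_divn p n : prime p -> 0 < n -> p %| n -> ~~ (n`_p %| n %/ p).
Proof.
move=> pp n0 pn; apply/negP => /(dvdn_mul (dvdnn p)).
by rewrite [p * (n %/ p)]mulnC divnK // p_part -expnS pfactor_dvdn // ltnn.
Qed.

Lemma exists_prime_neq p n : 1 < size (primes n) -> exists2 q, q \in primes n & q != p.
Proof.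
move=> n2; apply/hasP; apply: contraTT n2 => /hasPn all_p; rewrite -leqNgt.
by apply: (uniq_leq_size (s2 := [:: p]) (primes_uniq n)) => q /all_p; rewrite inE negbK.
Qed.

Lemma dvdn_prime_mul p q d : prime p -> prime q -> d %| p * q ->
  [\/ d = 1, d = p, d = q | d = p * q].
Proof.
move=> pp qq dpq; have [pd | npd] := boolP (p %| d).
  have /dvdnP[k dE] := pd; rewrite {}dE [k * p]mulnC in dpq *.
  move: dpq; rewrite dvdn_pmul2l ?prime_gt0 // => kq.
  have [->|k1] := eqVneq k 1; first by rewrite muln1; apply: Or42.
  by rewrite (prime_nt_dvdP qq k1 kq); apply: Or44.
move: dpq; rewrite Gauss_dvdr; last by rewrite coprime_sym prime_coprime.
have [->|d1] := eqVneq d 1; first by move=> _; apply: Or41.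
by move/(prime_nt_dvdP qq d1) ->; apply: Or43.
Qed.

Lemma divisor_adj_composite n d e :
  0 < n -> divisor_adj n d e -> [/\ 1 < d, ~~ prime d & d != n].
Proof.
move=> n0 /and5P[dn en g nde ned]; split.
- by rewrite ltn_neqAle (dvdn_gt0 n0 dn) andbT; apply: contraNneq nde => <-.
- by apply: contraL g => pd; move: nde; rewrite -prime_coprime // => /eqP ->.
- by apply: contraNneq ned => ->.
Qed.

Lemma divisor_adj_pq p q a b : prime p -> prime q -> ~~ divisor_adj (p * q) a b.
Proof.
move=> pp qq; apply/negP => adj.
have pq0 : 0 < p * q by rewrite muln_gt0 !prime_gt0.
have [a1 npa apq] := divisor_adj_composite pq0 adj.
have /(dvdn_prime_mul pp qq)[] : a %| p * q by case/and5P: adj.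
all: by move=> aE; move: a1 npa apq; rewrite aE ?pp ?qq ?eqxx ?andbF.
Qed.

Lemma divisor_adj_cofactors n p q : 0 < n -> prime p -> prime q -> p != q ->
  p %| n -> q %| n -> n != p * q -> divisor_adj n (n %/ p) (n %/ q).
Proof.
move=> n0 pp qq pq pn qn npq.
have cqp : coprime q p by rewrite prime_coprime // dvdn_prime2 // eq_sym.
have /dvdnP[m nE] : p * q %| n by rewrite Gauss_dvd ?pn ?qn // coprime_sym.
have m1 : 1 < m.
  rewrite ltn_neqAle lt0n; apply/andP; split.
    by apply: contraNneq npq => m1; rewrite nE -m1 mul1n.
  by apply: contraTneq n0 => m0; rewrite nE m0.
have npE : n %/ p = q * m by rewrite nE mulnCA mulKn ?prime_gt0 // mulnC.
have nqE : n %/ q = p * m by rewrite nE mulnA mulnK ?prime_gt0 // mulnC.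
rewrite /divisor_adj !dvdn_div //= npE nqE -muln_gcdl (eqP cqp) mul1n m1 /=.
by rewrite !dvdn_pmul2r ?(ltnW m1) // !dvdn_prime2 // eq_sym pq.
Qed.

Lemma divisor_adj_cofactor n q d : 0 < n -> prime q -> q %| n ->
  d %| n -> 1 < d -> ~~ prime d -> d != n -> ~~ (d %| n %/ q) ->
  divisor_adj n d (n %/ q).
Proof.
move=> n0 qq qn dn d1 npd dnn ndq.
rewrite /divisor_adj dn dvdn_div // ndq /=; apply/andP; split.
  rewrite ltnNge; apply: contra npd => g1.
  have cop : coprime d (n %/ q) by rewrite /coprime eqn_leq g1 gcdn_gt0 ltnW.
  have dq : d %| q by rewrite -(Gauss_dvdr _ cop) divnK.
  by rewrite (prime_nt_dvdP qq _ dq) // neq_ltn d1 orbT.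
apply: contra dnn => /dvdnP[k dE].
have nq0 : 0 < n %/ q by rewrite divn_gt0 ?prime_gt0 // dvdn_leq.
move: dn; rewrite {1}dE -[n in _ %| n](divnK qn) [_ * q]mulnC dvdn_pmul2r // => kq.
have [k1|k1] := eqVneq k 1; first by rewrite dE k1 mul1n dvdnn in ndq.
by rewrite dE (prime_nt_dvdP qq k1 kq) mulnC divnK.
Qed.

Lemma divisor_walk_prime_power n p q d : 0 < n -> prime p -> prime q -> p != q ->
  p %| n -> q %| n -> p * p %| d -> d %| n`_p -> d %| n %/ q ->
  walk_le (divisor_adj n) 2 d (n %/ q).
Proof.
move=> n0 pp qq pq pn qn ppd dP dnq.
set Q := n`_q.
have pd : p %| d := dvdn_trans (dvdn_mulr p (dvdnn p)) ppd.
have d0 : 0 < d := dvdn_gt0 (part_gt0 _ _) dP.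
have npQ : ~~ (p %| Q) by rewrite /Q p_part prime_ndvd_pfactor // eq_sym.
have nqd : ~~ (q %| d).
  apply: contra (prime_ndvd_pfactor (logn p n) pp qq pq).
  by rewrite -p_part => /dvdn_trans; apply.
have pQn : p * Q %| n by rewrite Gauss_dvd ?pn ?dvdn_part // prime_coprime.
have pp_ndvd_pQ : ~~ (p * p %| p * Q) by rewrite dvdn_pmul2l ?prime_gt0.
apply: (walk_le_cat (j := 1) (k := 1) (y := p * Q)); apply: walk_le1.
all: apply/and5P; split => //.
- exact: dvdn_trans dP (dvdn_part _ _).
- exact: gcdn_gt1 pp d0 pd (dvdn_mulr _ (dvdnn p)).
- by apply: contra pp_ndvd_pQ; apply: dvdn_trans.
- by apply: contra nqd; apply: dvdn_trans; apply/dvdn_mull/prime_dvd_p_part.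
- exact: dvdn_div.
- exact: gcdn_gt1 pp (dvdn_gt0 n0 pQn) (dvdn_mulr _ (dvdnn p)) (dvdn_trans pd dnq).
- by apply: contra (p_part_ndvd_divn qq n0 qn); apply: dvdn_trans; apply: dvdn_mull.
- by apply: contra pp_ndvd_pQ; apply: dvdn_trans (dvdn_trans ppd dnq).
Qed.

Lemma divisor_walk_p_part n p q d : 0 < n -> prime p -> prime q -> p != q ->
  p %| n -> q %| n -> p %| d -> ~~ (d %| n`_p) -> d %| n %/ p ->
  walk_le (divisor_adj n) 2 d (n %/ p).
Proof.
move=> n0 pp qq pq pn qn pd ndP dnp.
have dn : d %| n := dvdn_trans dnp (dvdn_div pn).
have pP := prime_dvd_p_part pp n0 pn.
have nPnp := p_part_ndvd_divn pp n0 pn.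
have qnp : q %| n %/ p.
  have cqp : coprime q p by rewrite prime_coprime // dvdn_prime2 // eq_sym.
  by rewrite -(Gauss_dvdl _ cqp) divnK.
apply: (walk_le_cat (j := 1) (k := 1) (y := n`_p)); apply: walk_le1.
all: apply/and5P; split => //.
- exact: dvdn_part.
- exact: gcdn_gt1 pp (dvdn_gt0 n0 dn) pd pP.
- by apply: contra nPnp => /dvdn_trans; apply.
- exact: dvdn_part.
- exact: dvdn_div.
- exact: gcdn_gt1 pp (part_gt0 _ _) pP (dvdn_trans pd dnp).
- apply: contra (prime_ndvd_pfactor (logn p n) pp qq pq); rewrite -p_part.
  exact: dvdn_trans qnp.
Qed.

Lemma divisor_adj_near_cofactor n d e : 0 < n -> 1 < size (primes n) ->
  divisor_adj n d e ->
  exists2 q, q \in primes n & walk_le (divisor_adj n) 2 d (n %/ q).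
Proof.
move=> n0 n_primes adj.
have [d1 npd dnn] := divisor_adj_composite n0 adj.
have dn : d %| n by case/and5P: adj.
have [/hasP[q qn ndq] | /hasPn dvd_cof] :=
  boolP (has (fun q => ~~ (d %| n %/ q)) (primes n)).
  exists q => //; apply: (walk_le_leq (leqnSn 1)); apply: walk_le1.
  by move: qn; rewrite mem_primes => /and3P[qq _ qn]; apply: divisor_adj_cofactor.
pose p := pdiv d; have pp : prime p := pdiv_prime d1.
have pd : p %| d := pdiv_dvd d.
have pn : p %| n := dvdn_trans pd dn.
have [q qn qp] := exists_prime_neq p n_primes.
have dnq : d %| n %/ q := negbNE (dvd_cof q qn).
move: qn; rewrite mem_primes => /and3P[qq _ qn].
have [dP | ndP] := boolP (d %| n`_p).
  exists q; first by rewrite mem_primes qq n0.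
  apply: (divisor_walk_prime_power n0 pp qq) => //; first by rewrite eq_sym.
  move: dP; rewrite p_part => /(dvdn_pfactor _ _ pp)[[|[|k]] _ dE].
  - by rewrite dE in d1.
  - by rewrite dE expn1 pp in npd.
  - by rewrite dE !expnS mulnA dvdn_mulr.
exists p; first by rewrite mem_primes pp n0.
apply: (divisor_walk_p_part n0 pp qq) => //; first by rewrite eq_sym.
by apply: negbNE; apply: dvd_cof; rewrite mem_primes pp n0.
Qed.

Local Open Scope group_scope.

Section CyclicDiffGraph.
Variables (gT : finGroupType) (G : {group gT}).
Hypothesis cG : cyclic G.

Lemma mem_cycle_cyclic x y :
  x \in G -> y \in G -> (x \in <[y]>) = (#[x] %| #[y])%N.
Proof. by move=> xG yG; rewrite -cycle_subG -(cardSg_cyclic cG) ?cycle_subG. Qed.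

Lemma cyclic_elt_order d : (d %| #|G|)%N -> exists2 z, z \in G & #[z] = d.
Proof.
have [g GE] := cyclicP cG; rewrite GE => dg.
exists (g ^+ (#[g] %/ d)); first exact: mem_cycle.
by rewrite orderXdiv ?dvdn_div // divnA // mulKn.
Qed.

Lemma cycle_meet_nontrivial x y : x \in G -> y \in G ->
  (<[x]> :&: <[y]> != 1) = (1 < gcdn #[x] #[y])%N.
Proof.
move=> xG yG; apply/idP/idP.
  case/trivgPn => z /setIP[zx zy] nz1.
  have zg : (#[z] %| gcdn #[x] #[y])%N by rewrite dvdn_gcd !order_dvdG.
  apply: leq_trans (dvdn_leq _ zg); last by rewrite gcdn_gt0 order_gt0.
  by rewrite ltn_neqAle order_gt0 andbT eq_sym order_eq1.
move=> g1; have gx : (gcdn #[x] #[y] %| #[x])%N := dvdn_gcdl _ _.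
have [u uG ou] := cyclic_elt_order (dvdn_trans gx (order_dvdG xG)).
apply/trivgPn; exists u; last by apply: contraTneq g1 => u1; rewrite -ou u1 order1.
by rewrite inE !mem_cycle_cyclic // ou gx dvdn_gcdr.
Qed.

Lemma diff_adjE x y :
  diff_adj G x y = [&& x \in G, y \in G & divisor_adj #|G| #[x] #[y]].
Proof.
rewrite /diff_adj /ipg_adj /pow_adj.
case xG: (x \in G); case yG: (y \in G) => //=.
rewrite !mem_cycle_cyclic // cycle_meet_nontrivial //.
rewrite /divisor_adj (order_dvdG xG) (order_dvdG yG) /=.
have [->|nx1] := eqVneq x 1; first by rewrite order1 dvd1n /= !andbT andbN andbF.
have [->|ny1] := eqVneq y 1; first by rewrite order1 dvd1n orbT !andbT andbN !andbF.
have [->|nxy] := eqVneq x y; first by rewrite dvdnn andbF.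
by rewrite /= negb_or.
Qed.

Lemma diff_adjC : symmetric (diff_adj G).
Proof. by move=> x y; rewrite !diff_adjE divisor_adjC; do !bool_congr. Qed.

Lemma diff_vertexP x : reflect (exists y, diff_adj G x y) (x \in diff_vertices G).
Proof.
rewrite inE; apply: (iffP andP) => [[_ /existsP //] | [y xy]].
by split; [move: xy; rewrite diff_adjE => /and3P[] | apply/existsP; exists y].
Qed.

(* Adjacency depends on orders only: each step of the walk of orders is realised
   by any element of that order, and the last step can be steered from #[y']
   onto y itself. *)
Lemma diff_walk_lift k x y y' : x \in G -> diff_adj G y' y ->
  walk_le (divisor_adj #|G|) k #[x] #[y'] -> walk_le (diff_adj G) k.+1 x y.
Proof.
move=> xG y'y [s [sk ps ls]]; apply: (walk_le_leq (j := (size s).+1)) => //.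
elim: s x xG ps ls {sk} => [|c s IH] x xG /=.
  move=> _ xy'; apply: walk_le1.
  by move: y'y; rewrite !diff_adjE xG xy' => /and3P[_ -> ->].
case/andP=> xc cs ls.
have [z zG oz] : exists2 z, z \in G & #[z] = c.
  by apply: cyclic_elt_order; case/and5P: xc.
rewrite -oz in xc cs ls.
apply: (walk_le_cat (j := 1) (walk_le1 _)) (IH z zG cs ls).
by rewrite diff_adjE xG zG.
Qed.

Lemma diff_vertices_pq p q :
  prime p -> prime q -> #|G| = (p * q)%N -> diff_vertices G = set0.
Proof.
move=> pp qq oG; apply/setP => x.
rewrite in_set0; apply/negbTE/diff_vertexP => -[y].
by rewrite diff_adjE oG (negbTE (divisor_adj_pq _ _ pp qq)) !andbF.
Qed.

Hypothesis G_primes : (1 < size (primes #|G|))%N.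
Hypothesis G_not_pq : forall p q, prime p -> prime q -> p != q -> #|G| != (p * q)%N.

Lemma diff_vertices_neq0 : diff_vertices G != set0.
Proof.
have [p pG _] := exists_prime_neq 0 G_primes.
have [q qG qp] := exists_prime_neq p G_primes.
move: pG qG; rewrite !mem_primes => /and3P[pp G0 pG] /and3P[qq _ qG].
have pq : p != q by rewrite eq_sym.
have adj := divisor_adj_cofactors G0 pp qq pq pG qG (G_not_pq pp qq pq).
have [z zG oz] := cyclic_elt_order (dvdn_div pG).
have [w wG ow] := cyclic_elt_order (dvdn_div qG).
apply/set0Pn; exists z; apply/diff_vertexP; exists w.
by rewrite diff_adjE zG wG oz ow.
Qed.

Lemma diff_diam_le6 : diff_diam_le G 6.
Proof.
move=> x y /diff_vertexP[x' xx'] /diff_vertexP[y' yy'].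
have y'y : diff_adj G y' y by rewrite diff_adjC.
have G0 := cardG_gt0 G.
move: (xx') (y'y); rewrite !diff_adjE => /and3P[xG _ adj_x] /and3P[_ _ adj_y'].
have [q1 q1G walk_x] := divisor_adj_near_cofactor G0 G_primes adj_x.
have [q2 q2G walk_y'] := divisor_adj_near_cofactor G0 G_primes adj_y'.
have hub : walk_le (divisor_adj #|G|) 1 (#|G| %/ q1) (#|G| %/ q2).
  have [<-|q12] := eqVneq q1 q2; first by exists [::].
  move: q1G q2G; rewrite !mem_primes => /and3P[q1p _ q1G] /and3P[q2p _ q2G].
  exact/walk_le1/divisor_adj_cofactors/G_not_pq.
have walk_xy' :=
  walk_le_cat (walk_le_cat walk_x hub) (walk_le_sym (divisor_adjC _) walk_y').
exact (diff_walk_lift xG y'y walk_xy').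
Qed.

End CyclicDiffGraph.

Lemma diff_connected_diam (gT : finGroupType) (G : {set gT}) d :
  diff_vertices G != set0 -> diff_diam_le G d -> diff_connected G.
Proof.
move=> nz diam; split => // x y xV yV.
by have [s [_ ps ls]] := diam x y xV yV; apply/connectP; exists s.
Qed.

Lemma cyclic_isog_Zp (gT : finGroupType) (G : {group gT}) m :
  cyclic G -> (0 < m)%N -> G \isog Zp m <-> #|G| = m.
Proof.
move=> cG m0; split => [/card_isog ->|oG]; first exact: card_Zp.
have [g GE] := cyclicP cG.
by rewrite -oG GE isog_sym; apply: Zp_isog.
Qed.

Theorem theorem4p4 (gT : finGroupType) (G : {group gT}) :
  cyclic G -> (1 < size (primes #|G|))%N ->
  ((~ diff_connected G) <->
     exists p q : nat, [/\ prime p, prime q, p != q & G \isog Zp (p * q)])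
  /\
  ((~ exists p q : nat, [/\ prime p, prime q, p != q & G \isog Zp (p * q)]) ->
     diff_diam_le G 6).
Proof.
move=> cG G_primes.
have isoE p q : prime p -> prime q -> G \isog Zp (p * q) <-> #|G| = (p * q)%N.
  by move=> pp qq; apply: cyclic_isog_Zp; rewrite // muln_gt0 !prime_gt0.
have [[p [q [pp qq pq iso]]] | not_pq] :=
  classic (exists p q : nat, [/\ prime p, prime q, p != q & G \isog Zp (p * q)]).
  have oG : #|G| = (p * q)%N by apply/isoE.
  have no_vertices := diff_vertices_pq cG pp qq oG.
  split; last by move=> no_pq; exfalso; apply: no_pq; exists p, q.
  by split=> [_|_ [nz _]]; [exists p, q | rewrite no_vertices eqxx in nz].
have G_not_pq p q : prime p -> prime q -> p != q -> #|G| != (p * q)%N.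
  move=> pp qq pq; apply: contra_not_neq not_pq => /(isoE p q pp qq) iso.
  by exists p, q.
have diam := diff_diam_le6 cG G_primes G_not_pq.
split=> //; split=> // not_conn; exfalso.
exact/not_conn/(diff_connected_diam _ diam)/diff_vertices_neq0.
Qed.
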